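(* Let $n$ be a positive integer, let $T_d\in\mathbb{R}^{n\times n}$ be a symmetric positive definite matrix (in the application, a $d$-level Toeplitz matrix), and let $D_d\in\mathbb{R}^{n\times n}$ be a diagonal matrix with nonnegative diagonal entries. Consider the real non-symmetric positive definite block linear system $\mathcal{R}_d x=f$ with $$\mathcal{R}_d=\begin{bmatrix} I & T_d-D_d\\ D_d-T_d & I\end{bmatrix}\in\mathbb{R}^{2n\times 2n},$$ and its splitting $\mathcal{R}_d=\mathcal{T}_d+\mathcal{D}_d$ with $$\mathcal{T}_d=\begin{bmatrix} 0 & T_d\\ -T_d & 0\end{bmatrix},\qquad \mathcal{D}_d=\begin{bmatrix} I & -D_d\\ D_d & I\end{bmatrix}.$$ Let $\omega>0$. For an arbitrary initial vector $x^{(0)}\in\mathbb{R}^{2n}$, define the iteration (the TBAN iteration) $$(\omega I+\mathcal{T}_d)x^{(k+\frac12)}=(\omega I-\mathcal{D}_d)x^{(k)}+f,\qquad (\omega I+\mathcal{D}_d)x^{(k+1)}=(\omega I-\mathcal{T}_d)x^{(k+\frac12)}+f,\quad k=0,1,2,\dots$$ Then the sequence $\{x^{(k)}\}_{k\ge0}$ converges to the unique solution of $\mathcal{R}_d x=f$. Moreover, with $$\mathcal{F}_{d,\omega}=\tfrac{1}{2\omega}(\omega I+\mathcal{T}_d)(\omega I+\mathcal{D}_d),\quad \mathcal{G}_{d,\omega}=\tfrac{1}{2\omega}(\omega I-\mathcal{T}_d)(\omega I-\mathcal{D}_d),\quad \mathcal{L}_{d,\omega}=\mathcal{F}_{d,\omega}^{-1}\mathcal{G}_{d,\omega},$$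 the spectral radius of the iteration matrix satisfies $$\rho(\mathcal{L}_{d,\omega})\le \sigma(\omega)<1\quad\text{for all }\omega>0,\qquad \sigma(\omega)=\sqrt{\frac{(\omega-1)^2+\lambda_{\max}^2}{(\omega+1)^2+\lambda_{\max}^2}},$$ where $\lambda_{\max}$ is the maximum diagonal entry of $D_d$.
   Context: This arises from writing a complex linear system $(D_d-T_d+\imath I)\mathbf{u}=\mathbf{b}$ with $\mathbf{u}=y+\imath z$, $\mathbf{b}=p+\imath q$ in real form, $x=[z;y]$, $f=[-p;q]$. Here $I$ denotes identity matrices of the appropriate size and $\rho(\cdot)$ is the spectral radius. *)

From mathcomp Require Import all_boot all_order all_algebra.
From mathcomp Require Import all_classical all_reals all_analysis.
From mathcomp Require Import complex.
Set Implicit Arguments. Unset Strict Implicit. Unset Printing Implicit Defensive.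
Import Order.TTheory GRing.Theory Num.Theory numFieldNormedType.Exports.
Local Open Scope ring_scope.
Local Open Scope classical_set_scope.

Definition spectral_radius (R : realType) (m : nat) (A : 'M[R]_m) : R :=
  sup ((@Normc.normc R) @`
         [set l : R[i] | eigenvalue (map_mx (fun r : R => (r%:C)%C) A) l]).

Definition spd (R : realType) (n : nat) (T : 'M[R]_n) : Prop :=
  T^T = T /\ (forall v : 'cV[R]_n, v != 0 -> 0 < (v^T *m T *m v) 0 0).

Definition Rblk (R : realType) (n : nat) (T D : 'M[R]_n) : 'M[R]_(n + n) :=
  block_mx 1%:M (T - D) (D - T) 1%:M.
Definition Tblk (R : realType) (n : nat) (T : 'M[R]_n) : 'M[R]_(n + n) :=
  block_mx 0 T (- T) 0.
Definition Dblk (R : realType) (n : nat) (D : 'M[R]_n) : 'M[R]_(n + n) :=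
  block_mx 1%:M (- D) D 1%:M.

Definition Fmat (R : realType) (n : nat) (T D : 'M[R]_n) (w : R) : 'M[R]_(n + n) :=
  (2 * w)^-1 *: ((w%:M + Tblk T) *m (w%:M + Dblk D)).
Definition Gmat (R : realType) (n : nat) (T D : 'M[R]_n) (w : R) : 'M[R]_(n + n) :=
  (2 * w)^-1 *: ((w%:M - Tblk T) *m (w%:M - Dblk D)).
Definition Lmat (R : realType) (n : nat) (T D : 'M[R]_n) (w : R) : 'M[R]_(n + n) :=
  invmx (Fmat T D w) *m Gmat T D w.

Definition tban_half (R : realType) (n : nat) (T D : 'M[R]_n) (w : R)
  (f x : 'cV[R]_(n + n)) : 'cV[R]_(n + n) :=
  invmx (w%:M + Tblk T) *m ((w%:M - Dblk D) *m x + f).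
Definition tban_step (R : realType) (n : nat) (T D : 'M[R]_n) (w : R)
  (f x : 'cV[R]_(n + n)) : 'cV[R]_(n + n) :=
  invmx (w%:M + Dblk D) *m ((w%:M - Tblk T) *m tban_half T D w f x + f).
Definition tban_seq (R : realType) (n : nat) (T D : 'M[R]_n) (w : R)
  (f x0 : 'cV[R]_(n + n)) (k : nat) : 'cV[R]_(n + n) :=
  iter k (tban_step T D w f) x0.

(* lambda_max: maximum diagonal entry of D (n > 0 and entries are >= 0,
   so starting the fold at 0 is harmless). *)
Definition lambda_max (R : realType) (n : nat) (D : 'M[R]_n) : R :=
  \big[Num.max/0]_(i < n) D i i.

Definition sigma (R : realType) (lmax w : R) : R :=
  Num.sqrt (((w - 1) ^+ 2 + lmax ^+ 2) / ((w + 1) ^+ 2 + lmax ^+ 2)).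

From mathcomp Require Import all_boot all_order all_algebra.
From mathcomp Require Import all_classical all_reals all_analysis.
From mathcomp Require Import complex.
From mathcomp Require Import ring lra.
Set Implicit Arguments. Unset Strict Implicit. Unset Printing Implicit Defensive.
Import Order.TTheory GRing.Theory Num.Theory numFieldNormedType.Exports.
Local Open Scope ring_scope.
Local Open Scope classical_set_scope.

(* Write |x| for the Euclidean norm.  For skew-symmetric S,
   |(aI + S) v|^2 = a^2 |v|^2 + |S v|^2, so aI + S is invertible when a <> 0
   and |(aI - S) v| = |(aI + S) v|.  For symmetric S the matrix Tblk S is
   skew-symmetric, and Rblk T D = I + Tblk (T - D),
   wI + Dblk D = (w + 1) I - Tblk D, wI - Dblk D = (w - 1) I + Tblk D, with
   |Tblk D x| <= lambda_max |x|; this gives the invertibility statements and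
   |(wI - Dblk D) x| <= sigma(w) |(wI + Dblk D) x|.  Since
   (wI + Dblk D) L = (wI - Tblk T) (wI + Tblk T)^-1 (wI - Dblk D) and the
   Cayley factor is an isometry, L contracts by sigma(w) in the norm
   x |-> |(wI + Dblk D) x|.  The iteration errors satisfy e_(k+1) = L e_k and so
   decay geometrically; applied to the real and imaginary parts of a complex
   eigenvector, the contraction bounds every eigenvalue of L by sigma(w). *)

Lemma unitmx_ker0 (F : fieldType) m (A : 'M[F]_m) :
  (forall x : 'cV[F]_m, A *m x = 0 -> x = 0) -> A \in unitmx.
Proof.
move=> ker0; rewrite unitmxE unitfE -det_tr; apply/det0P => -[v v0 vA0].
have := ker0 v^T; rewrite -[A]trmxK -trmx_mul vA0 trmx0 => /(_ erefl) /eqP.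
by rewrite trmx_eq0 (negbTE v0).
Qed.

Section SquaredNorm.
Variable R : realFieldType.

Definition sqnorm (m : nat) (v : 'cV[R]_m) : R := \sum_i v i 0 ^+ 2.

Lemma sqnorm_ge0 m (v : 'cV[R]_m) : 0 <= sqnorm v.
Proof. by apply: sumr_ge0 => i _; rewrite sqr_ge0. Qed.

Lemma sqr_coord_le_sqnorm m (v : 'cV[R]_m) i : v i 0 ^+ 2 <= sqnorm v.
Proof. by rewrite /sqnorm (bigD1 i) //= lerDl sumr_ge0 // => j _; rewrite sqr_ge0. Qed.

Lemma sqnorm_eq0 m (v : 'cV[R]_m) : (sqnorm v == 0) = (v == 0).
Proof.
apply/eqP/eqP => [v0|->]; last by rewrite /sqnorm big1 // => i _; rewrite mxE expr0n.
apply/matrixP => i j; rewrite (ord1 j) mxE; apply/eqP; rewrite -sqrf_eq0 eq_le.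
by rewrite -[X in _ <= X]v0 sqr_coord_le_sqnorm sqr_ge0.
Qed.

Lemma sqnormN m (v : 'cV[R]_m) : sqnorm (- v) = sqnorm v.
Proof. by apply: eq_bigr => i _; rewrite mxE sqrrN. Qed.

Lemma sqnormZ m a (v : 'cV[R]_m) : sqnorm (a *: v) = a ^+ 2 * sqnorm v.
Proof. by rewrite /sqnorm mulr_sumr; apply: eq_bigr => i _; rewrite mxE exprMn. Qed.

Lemma sqnormD m (u v : 'cV[R]_m) :
  sqnorm (u + v) = sqnorm u + 2 * (u^T *m v) 0 0 + sqnorm v.
Proof.
rewrite /sqnorm mxE mulr_sumr -!big_split /=; apply: eq_bigr => i _.
by rewrite !mxE; ring.
Qed.

Lemma sqnorm_col_mx m1 m2 (u : 'cV[R]_m1) (v : 'cV[R]_m2) :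
  sqnorm (col_mx u v) = sqnorm u + sqnorm v.
Proof.
by rewrite /sqnorm big_split_ord; congr (_ + _); apply: eq_bigr => i _;
  rewrite ?col_mxEu ?col_mxEd.
Qed.

Lemma skew_form_eq0 m (S : 'M[R]_m) (v : 'cV[R]_m) :
  S^T = - S -> (v^T *m (S *m v)) 0 0 = 0.
Proof.
move=> skewS; set s := v^T *m (S *m v).
have : s^T = - s by rewrite /s !trmx_mul trmxK skewS mulmxN mulNmx mulmxA.
by move/matrixP/(_ 0 0); rewrite !mxE; lra.
Qed.

Lemma sqnorm_scalar_skew m (S : 'M[R]_m) a (v : 'cV[R]_m) : S^T = - S ->
  sqnorm ((a%:M + S) *m v) = a ^+ 2 * sqnorm v + sqnorm (S *m v).
Proof.
move=> skewS; rewrite mulmxDl mul_scalar_mx sqnormD sqnormZ.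
by rewrite linearZ -scalemxAl mxE skew_form_eq0 // !mulr0 addr0.
Qed.

Lemma sqnorm_scalar_skewN m (S : 'M[R]_m) a (v : 'cV[R]_m) : S^T = - S ->
  sqnorm ((a%:M - S) *m v) = sqnorm ((a%:M + S) *m v).
Proof.
move=> skewS; have skewNS : (- S)^T = - - S by rewrite linearN /= skewS.
by rewrite !sqnorm_scalar_skew // mulNmx sqnormN.
Qed.

Lemma unitmx_scalar_skew m (S : 'M[R]_m) a :
  a != 0 -> S^T = - S -> (a%:M + S) \in unitmx.
Proof.
move=> a0 skewS; apply: unitmx_ker0 => v Av0; apply/eqP.
have /eqP : sqnorm ((a%:M + S) *m v) = 0 by rewrite Av0; apply/eqP; rewrite sqnorm_eq0.
rewrite sqnorm_scalar_skew //.
rewrite paddr_eq0 ?sqnorm_ge0 ?(mulr_ge0 (sqr_ge0 a)) ?sqnorm_ge0 //.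
by rewrite mulf_eq0 sqrf_eq0 (negbTE a0) !sqnorm_eq0 => /andP[].
Qed.

Lemma sqnorm_diag_le m (D : 'M[R]_m) c (v : 'cV[R]_m) :
  is_diag_mx D -> (forall i, D i i ^+ 2 <= c) -> sqnorm (D *m v) <= c * sqnorm v.
Proof.
case/diag_mxP => d -> Dc; rewrite /sqnorm mulr_sumr mul_diag_mx.
apply: ler_sum => i _; rewrite mxE exprMn ler_wpM2r ?sqr_ge0 //.
by have := Dc i; rewrite mxE eqxx mulr1n.
Qed.

End SquaredNorm.

Section Blocks.
Variables (R : realType) (n : nat).
Implicit Types (S T D : 'M[R]_n) (x : 'cV[R]_(n + n)).

Lemma Tblk_skew S : S^T = S -> (Tblk S)^T = - Tblk S.
Proof.
move=> symS; rewrite /Tblk tr_block_mx opp_block_mx !trmx0 !oppr0 linearN /=.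
by rewrite symS opprK.
Qed.

Lemma Dblk_scalar D a : a%:M + Dblk D = (a + 1)%:M - Tblk D.
Proof.
rewrite /Dblk /Tblk !scalar_mx_block opp_block_mx !add_block_mx !oppr0.
by rewrite !add0r !addr0 opprK -!raddfD.
Qed.

Lemma Dblk_scalarN D a : a%:M - Dblk D = (a - 1)%:M + Tblk D.
Proof.
rewrite /Dblk /Tblk !scalar_mx_block opp_block_mx !add_block_mx.
by rewrite !add0r !addr0 opprK -!raddfB.
Qed.

Lemma Rblk_scalar T D : Rblk T D = 1%:M + Tblk (T - D).
Proof.
by rewrite /Rblk /Tblk scalar_mx_block add_block_mx !addr0 !add0r opprB.
Qed.

Lemma Rblk_split T D : Rblk T D = Tblk T + Dblk D.
Proof.
by rewrite /Rblk /Tblk /Dblk add_block_mx !add0r [T + _]addrC [- T + _]addrC.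
Qed.

Lemma sqnorm_Tblk S x :
  sqnorm (Tblk S *m x) = sqnorm (S *m dsubmx x) + sqnorm (S *m usubmx x).
Proof.
rewrite -{1}[x]vsubmxK /Tblk mul_block_col !mul0mx add0r addr0 sqnorm_col_mx.
by rewrite mulNmx sqnormN.
Qed.

Lemma sqnorm_Tblk_diag_le D c x : is_diag_mx D -> (forall i, D i i ^+ 2 <= c) ->
  sqnorm (Tblk D *m x) <= c * sqnorm x.
Proof.
move=> diagD Dc; rewrite sqnorm_Tblk -{3}[x]vsubmxK sqnorm_col_mx addrC mulrDr.
by apply: lerD; apply: sqnorm_diag_le.
Qed.

End Blocks.

Section Sigma.
Variable R : realType.
Implicit Types l w : R.

Lemma sigma_sqr l w :
  sigma l w ^+ 2 = ((w - 1) ^+ 2 + l ^+ 2) / ((w + 1) ^+ 2 + l ^+ 2).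
Proof. by rewrite sqr_sqrtr // divr_ge0 // addr_ge0 ?sqr_ge0. Qed.

Lemma sigma_lt1 l w : 0 < w -> sigma l w < 1.
Proof.
move=> w_gt0; rewrite -sqrtr1 ltr_sqrt ?ltr01 //.
rewrite ltr_pdivrMr ?mul1r; have := sqr_ge0 l; nra.
Qed.

(* The ratio ((w - 1)^2 s + q) / ((w + 1)^2 s + q) increases with q, so it is
   largest at q = l^2 s. *)
Lemma le_sigma_sqr l w s q : 0 < w -> 0 <= s -> 0 <= q <= l ^+ 2 * s ->
  (w - 1) ^+ 2 * s + q <= sigma l w ^+ 2 * ((w + 1) ^+ 2 * s + q).
Proof.
move=> w_gt0 s_ge0 /andP[q_ge0 q_le]; have := sqr_ge0 l => l2_ge0.
rewrite sigma_sqr [X in _ <= X]mulrAC ler_pdivlMr; last by nra.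
have : 0 <= w * (l ^+ 2 * s - q) by rewrite mulr_ge0 ?subr_ge0 // ltW.
nra.
Qed.

End Sigma.

Section GeometricDecay.
Variable R : realType.

Lemma normr_le_sqrt_sqnorm m (v : 'cV[R]_m) : `|v| <= Num.sqrt (sqnorm v).
Proof.
rewrite [leLHS]/Num.Def.normr /= mx_normrE.
apply: bigmax_le => [|[i j] _]; first exact: sqrtr_ge0.
by rewrite (ord1 j) -sqrtr_sqr ler_sqrt ?sqnorm_ge0 ?sqr_coord_le_sqnorm.
Qed.

Lemma cvg_sqnorm_geometric m (u : nat -> 'cV[R]_m) C s : 0 <= s < 1 ->
  (forall k, sqnorm (u k) <= C * (s ^+ k) ^+ 2) -> u @ \oo --> (0 : 'cV_m).
Proof.
move=> /andP[s_ge0 s_lt1] u_le; have C_ge0 : 0 <= C.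
  by have := u_le 0%N; rewrite expr0 expr1n mulr1; apply: le_trans; apply: sqnorm_ge0.
have geo0 : (fun k => Num.sqrt C * s ^+ k) @ \oo --> (0 : R).
  by rewrite -(mulr0 (Num.sqrt C)); apply: cvgMr; apply: cvg_expr; rewrite ger0_norm.
apply/norm_cvg0P; apply: (squeeze_cvgr _ (cvg_cst 0) geo0).
near=> k; rewrite normr_ge0 /=; apply: le_trans (normr_le_sqrt_sqnorm _) _.
rewrite -[s ^+ k]ger0_norm ?exprn_ge0 // -sqrtr_sqr -sqrtrM //.
by rewrite ler_sqrt ?u_le // mulr_ge0 // sqr_ge0.
Unshelve. all: by end_near.
Qed.

End GeometricDecay.

Lemma eigenvalue_col (F : fieldType) m (A : 'M[F]_m) a :
  eigenvalue A a -> exists2 z : 'cV_m, A *m z = a *: z & z != 0.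
Proof.
move=> eigA; have /eigenvalueP[v vAt v0] : eigenvalue A^T a.
  move: eigA; rewrite /eigenvalue /eigenspace !kermx_eq0 !row_free_unit.
  by rewrite -unitmx_tr linearB /= tr_scalar_mx.
by exists v^T; rewrite ?trmx_eq0 // -[A]trmxK -trmx_mul vAt linearZ.
Qed.

Section Complexification.
Variable R : realType.
Local Notation C := R[i].
Local Notation cplx A := (map_mx (fun r : R => (r%:C)%C) A).

Lemma cplx_rectE m p (z : 'M[C]_(m, p)) :
  z = cplx (map_mx (@complex.Re R) z) + 'i%C *: cplx (map_mx (@complex.Im R) z).
Proof. by apply/matrixP => i j; rewrite !mxE; apply: complexE. Qed.

Lemma cplx_rect_inj m p (P Q P' Q' : 'M[R]_(m, p)) :
  cplx P + 'i%C *: cplx Q = cplx P' + 'i%C *: cplx Q' -> P = P' /\ Q = Q'.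
Proof.
move/matrixP => eqPQ; split; apply/matrixP => i j;
  by have := eqPQ i j; rewrite !mxE; simpc => -[].
Qed.

Lemma cplx_eigen_rect m (L : 'M[R]_m) (a b : R) (u v : 'cV[R]_m) :
  cplx L *m (cplx u + 'i%C *: cplx v) = (a +i* b)%C *: (cplx u + 'i%C *: cplx v) ->
  L *m u = a *: u - b *: v /\ L *m v = b *: u + a *: v.
Proof.
move=> eig; apply: cplx_rect_inj; rewrite !map_mxM scalemxAr -mulmxDr eig.
by apply/matrixP => i j; rewrite !mxE; simpc; rewrite [b * _ + _]addrC.
Qed.

Lemma sqnorm_rotate m (a b : R) (p q : 'cV[R]_m) :
  sqnorm (a *: p - b *: q) + sqnorm (b *: p + a *: q) =
  (a ^+ 2 + b ^+ 2) * (sqnorm p + sqnorm q).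
Proof.
rewrite /sqnorm -!big_split mulr_sumr /=; apply: eq_bigr => i _.
by rewrite !mxE; ring.
Qed.

Lemma spectral_radius_le m (L M : 'M[R]_m) q : M \in unitmx ->
  (forall x, sqnorm (M *m (L *m x)) <= q * sqnorm (M *m x)) ->
  spectral_radius L <= Num.sqrt q.
Proof.
move=> unitM contr; rewrite /spectral_radius; set S := _ @` _.
have [->|/set0P S0] := eqVneq S set0; first by rewrite sup0 sqrtr_ge0.
apply: ge_sup => // _ [[a b] /eigenvalue_col[z eig z0] <-] /=.
move: eig z0; rewrite [z]cplx_rectE; set u := map_mx _ z; set v := map_mx _ z.
move=> /cplx_eigen_rect[Lu Lv] uv0; apply: ler_wsqrtr.
have Minj x : (M *m x == 0) = (x == 0).
  apply/eqP/eqP => [/(congr1 (mulmx (invmx M)))|->]; last exact: mulmx0.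
  by rewrite mulKmx // mulmx0.
have P_gt0 : 0 < sqnorm (M *m u) + sqnorm (M *m v).
  rewrite lt_def paddr_eq0 ?sqnorm_ge0 // !sqnorm_eq0 !Minj addr_ge0 ?sqnorm_ge0 //.
  rewrite andbT; apply: contraNN uv0 => /andP[/eqP-> /eqP->].
  by rewrite !map_mx0 scaler0 addr0.
rewrite -(ler_pM2r P_gt0) -sqnorm_rotate !scalemxAr -mulmxBr -mulmxDr -Lu -Lv.
by rewrite mulrDr; apply: lerD; apply: contr.
Qed.

End Complexification.

Section TBAN.
Variables (R : realType) (n : nat) (T D : 'M[R]_n) (w : R).
Hypotheses (symT : T^T = T) (diagD : is_diag_mx D) (w_gt0 : 0 < w).

Local Notation AT := (w%:M + Tblk T).
Local Notation AD := (w%:M + Dblk D).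
Local Notation L := (Lmat T D w).

Let symD : D^T = D.
Proof. by case/diag_mxP: diagD => d ->; rewrite tr_diag_mx. Qed.

Let skewTD : (Tblk D)^T = - Tblk D.
Proof. exact: Tblk_skew. Qed.

Lemma unitmx_scalar_Tblk : AT \in unitmx.
Proof. by apply: unitmx_scalar_skew; rewrite ?gt_eqF ?Tblk_skew. Qed.

Lemma unitmx_scalar_Dblk : AD \in unitmx.
Proof.
rewrite Dblk_scalar; apply: unitmx_scalar_skew; first by rewrite gt_eqF ?ltr_wpDr.
by rewrite linearN /= skewTD.
Qed.

Lemma unitmx_Rblk : Rblk T D \in unitmx.
Proof.
rewrite Rblk_scalar; apply: unitmx_scalar_skew; rewrite ?oner_neq0 ?Tblk_skew //.
by rewrite linearB /= symT symD.
Qed.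

Lemma sqnorm_scalar_Dblk_ge x : (w + 1) ^+ 2 * sqnorm x <= sqnorm (AD *m x).
Proof.
rewrite Dblk_scalar sqnorm_scalar_skewN // sqnorm_scalar_skew //.
by rewrite lerDl sqnorm_ge0.
Qed.

Lemma sqnorm_scalar_DblkN_le l x : (forall i, 0 <= D i i <= l) ->
  sqnorm ((w%:M - Dblk D) *m x) <= sigma l w ^+ 2 * sqnorm (AD *m x).
Proof.
move=> Dl; rewrite Dblk_scalarN Dblk_scalar sqnorm_scalar_skewN //.
rewrite !sqnorm_scalar_skew //; apply: le_sigma_sqr; rewrite ?sqnorm_ge0 //=.
apply: sqnorm_Tblk_diag_le => // i; have /andP[D_ge0 D_le] := Dl i.
by rewrite ler_sqr ?nnegrE // (le_trans D_ge0).
Qed.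

Lemma Lmat_eq : L = invmx AD *m (w%:M - Tblk T) *m invmx AT *m (w%:M - Dblk D).
Proof.
have unitF : Fmat T D w \in unitmx.
  rewrite unitmxZ ?unitmx_mul ?unitmx_scalar_Tblk ?unitmx_scalar_Dblk //.
  by rewrite unitfE invr_eq0 mulf_neq0 ?gt_eqF.
have commT : AT *m (w%:M - Tblk T) = (w%:M - Tblk T) *m AT.
  have commw (A : 'M[R]_(n + n)) : GRing.comm w%:M A.
    by rewrite /GRing.comm -!mulmxE scalar_mxC.
  rewrite mulmxE; apply: commrD; first exact/commr_sym/commw.
  by apply/commrN/commr_sym/commrD; [exact/commr_sym/commw | by []].
rewrite /Lmat -[RHS](mulKmx unitF) /Fmat /Gmat -scalemxAl; congr (_ *m (_ *: _)).
by rewrite !mulmxA mulmxK ?unitmx_scalar_Dblk // commT mulmxK ?unitmx_scalar_Tblk.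
Qed.

Lemma sqnorm_scalar_Dblk_Lmat_le l x : (forall i, 0 <= D i i <= l) ->
  sqnorm (AD *m (L *m x)) <= sigma l w ^+ 2 * sqnorm (AD *m x).
Proof.
move=> Dl; rewrite Lmat_eq -!mulmxA mulKVmx ?unitmx_scalar_Dblk //.
rewrite sqnorm_scalar_skewN ?Tblk_skew // mulKVmx ?unitmx_scalar_Tblk //.
exact: sqnorm_scalar_DblkN_le.
Qed.

Lemma tban_stepB f x y : tban_step T D w f x - tban_step T D w f y = L *m (x - y).
Proof.
have subD2r (a b c : 'cV[R]_(n + n)) : a + c - (b + c) = a - b.
  by rewrite opprD addrACA subrr addr0.
rewrite Lmat_eq /tban_step /tban_half -!mulmxA -mulmxBr subD2r.
by rewrite -!mulmxBr subD2r -mulmxBr.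
Qed.

Lemma tban_step_fix f xs : Rblk T D *m xs = f -> tban_step T D w f xs = xs.
Proof.
move=> sol; have half : tban_half T D w f xs = xs.
  rewrite /tban_half -sol Rblk_split -mulmxDl addrCA addrNK addrC.
  by rewrite mulKmx ?unitmx_scalar_Tblk.
rewrite /tban_step half -sol Rblk_split -mulmxDl addrA addrNK.
by rewrite mulKmx ?unitmx_scalar_Dblk.
Qed.

Lemma tban_seq_cvg l f x0 xs : (forall i, 0 <= D i i <= l) ->
  Rblk T D *m xs = f -> tban_seq T D w f x0 @ \oo --> xs.
Proof.
move=> Dl sol; apply/subr_cvg0; set e := fun k => tban_seq T D w f x0 k - xs.
have e_succ k : e k.+1 = L *m e k.
  by rewrite /e /tban_seq iterS -{1}(tban_step_fix sol) tban_stepB.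
have e_decay k : sqnorm (AD *m e k) <= (sigma l w ^+ 2) ^+ k * sqnorm (AD *m e 0%N).
  elim: k => [|k IH]; first by rewrite expr0 mul1r.
  rewrite e_succ exprS -mulrA; apply: le_trans (sqnorm_scalar_Dblk_Lmat_le _ Dl) _.
  by rewrite ler_wpM2l ?sqr_ge0.
apply: (@cvg_sqnorm_geometric _ _ e (sqnorm (AD *m e 0%N) / (w + 1) ^+ 2)
  (sigma l w)).
  by rewrite sigma_lt1 // andbT; apply: sqrtr_ge0.
move=> k; rewrite mulrAC ler_pdivlMr ?exprn_gt0 ?addr_gt0 // mulrC.
by apply: le_trans (sqnorm_scalar_Dblk_ge _) _; rewrite exprAC mulrC.
Qed.

Lemma spectral_radius_Lmat_le l : (forall i, 0 <= D i i <= l) ->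
  spectral_radius L <= sigma l w.
Proof.
move=> Dl; apply: spectral_radius_le unitmx_scalar_Dblk _ => x.
by rewrite -sigma_sqr; apply: sqnorm_scalar_Dblk_Lmat_le.
Qed.

End TBAN.

Lemma diag_le_lambda_max (R : realType) n (D : 'M[R]_n) :
  (forall i, 0 <= D i i) -> forall i, 0 <= D i i <= lambda_max D.
Proof. by move=> D_ge0 i; rewrite D_ge0 (le_bigmax 0 (fun j => D j j) i). Qed.

Theorem theorem1 (R : realType) (n : nat) (Td Dd : 'M[R]_n) :
  (0 < n)%N ->
  spd Td ->
  is_diag_mx Dd ->
  (forall i : 'I_n, 0 <= Dd i i) ->
  (* the linear system has a unique solution for every right-hand side *)
  (forall f : 'cV[R]_(n + n), exists! xs : 'cV[R]_(n + n), Rblk Td Dd *m xs = f) /\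
  (forall w : R, 0 < w ->
     (* the TBAN iteration is well defined *)
     (w%:M + Tblk Td) \in unitmx /\ (w%:M + Dblk Dd) \in unitmx /\
     (* it converges to the solution for every f and every initial vector *)
     (forall (f x0 : 'cV[R]_(n + n)) (xs : 'cV[R]_(n + n)),
        Rblk Td Dd *m xs = f -> tban_seq Td Dd w f x0 @ \oo --> xs) /\
     (* spectral radius bound *)
     spectral_radius (Lmat Td Dd w) <= sigma (lambda_max Dd) w /\
     sigma (lambda_max Dd) w < 1).
Proof.
move=> _ [symT _] diagD D_ge0; have Dl := diag_le_lambda_max D_ge0.
split=> [f | w w_gt0].
  have unitR := unitmx_Rblk symT diagD.
  exists (invmx (Rblk Td Dd) *m f); split; first by rewrite mulKVmx.
  by move=> y <-; rewrite mulKmx.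
split; first exact: unitmx_scalar_Tblk.
split; first exact: unitmx_scalar_Dblk.
split; first by move=> f x0 xs; apply: tban_seq_cvg.
by split; [apply: spectral_radius_Lmat_le | apply: sigma_lt1].
Qed.
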